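(* Fix $n\ge d+1$ and a realization for which $S_n$ is positive definite. Then \[ \lim_{\gamma\to\infty}\gamma^{2+d/2}\,\frac{16\,T_{n,\gamma}}{n\,\pi^{d/2}}=2b_{1,d}+\widetilde b_{1,d}, \] where \[ b_{1,d}=\frac{1}{n^2}\sum_{j,k=1}^n (Y_{n,j}^\top Y_{n,k})^3,\qquad \widetilde b_{1,d}=\frac{1}{n^2}\sum_{j,k=1}^n Y_{n,j}^\top Y_{n,k}\,\|Y_{n,j}\|^2\,\|Y_{n,k}\|^2 . \]
   Context: Let $X_1,\dots,X_n$ be points of $\mathbb{R}^d$ (realizations of i.i.d. absolutely continuous random vectors). Put $\overline{X}_n=n^{-1}\sum_{j=1}^n X_j$, $S_n=n^{-1}\sum_{j=1}^n (X_j-\overline{X}_n)(X_j-\overline{X}_n)^\top$, let $S_n^{-1/2}$ be the symmetric positive definite square root of $S_n^{-1}$, and $Y_{n,j}=S_n^{-1/2}(X_j-\overline{X}_n)$. Let $M_n(t)=n^{-1}\sum_{j=1}^n \exp(t^\top Y_{n,j})$ with gradient $M_n'$, $w_\gamma(t)=\exp(-\gamma\|t\|^2)$, and $T_{n,\gamma}=n\int_{\mathbb{R}^d}\|M_n'(t)-tM_n(t)\|^2w_\gamma(t)\,\mathrm{d}t$. *)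

From Stdlib Require Import Reals Lra.
Open Scope R_scope.

Fixpoint rsum (n : nat) (f : nat -> R) : R :=
  match n with O => 0 | S k => rsum k f + f k end.

(* Vectors of R^d are functions nat -> R (only indices < d matter);
   a sample X_1..X_n is X : nat -> nat -> R, X j i = i-th coord of X_{j+1}. *)
Definition dot (d : nat) (u v : nat -> R) : R := rsum d (fun i => u i * v i).
Definition nrm2 (d : nat) (u : nat -> R) : R := dot d u u.

Definition sample_mean (n : nat) (X : nat -> nat -> R) (i : nat) : R :=
  / INR n * rsum n (fun j => X j i).

Definition sample_cov (n : nat) (X : nat -> nat -> R) (i k : nat) : R :=
  / INR n * rsum n (fun j => (X j i - sample_mean n X i) * (X j k - sample_mean n X k)).

Definition sym_mat (d : nat) (A : nat -> nat -> R) : Prop :=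
  forall i k, (i < d)%nat -> (k < d)%nat -> A i k = A k i.

Definition pos_def (d : nat) (A : nat -> nat -> R) : Prop :=
  forall v : nat -> R, (exists i, (i < d)%nat /\ v i <> 0) ->
    0 < rsum d (fun i => rsum d (fun k => v i * A i k * v k)).

Definition mat_mul (d : nat) (A B : nat -> nat -> R) : nat -> nat -> R :=
  fun i k => rsum d (fun l => A i l * B l k).

Definition is_inverse (d : nat) (A B : nat -> nat -> R) : Prop :=
  forall i k, (i < d)%nat -> (k < d)%nat ->
    mat_mul d A B i k = if Nat.eqb i k then 1 else 0.

Definition is_sym_sqrt_inv (d : nat) (A S : nat -> nat -> R) : Prop :=
  sym_mat d A /\ pos_def d A /\ is_inverse d (mat_mul d A A) S.

Definition Yres (n d : nat) (A : nat -> nat -> R) (X : nat -> nat -> R)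
  (j : nat) : nat -> R :=
  fun i => rsum d (fun l => A i l * (X j l - sample_mean n X l)).

Definition Mn (n d : nat) (Y : nat -> nat -> R) (t : nat -> R) : R :=
  / INR n * rsum n (fun j => exp (dot d t (Y j))).
Definition Mn_grad (n d : nat) (Y : nat -> nat -> R) (t : nat -> R) (i : nat) : R :=
  / INR n * rsum n (fun j => Y j i * exp (dot d t (Y j))).

Definition integrand (n d : nat) (Y : nat -> nat -> R) (gamma : R) (t : nat -> R) : R :=
  rsum d (fun i => (Mn_grad n d Y t i - t i * Mn n d Y t) ^ 2)
  * exp (- gamma * nrm2 d t).

Definition ImproperInt (g : R -> R) (l : R) : Prop :=
  (forall a b, exists pr : Riemann_integrable g a b, True) /\
  forall eps, 0 < eps -> exists M, forall a b (pr : Riemann_integrable g a b),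
      a <= - M -> M <= b -> Rabs (RiemannInt pr - l) < eps.

Definition vcons (x : R) (t : nat -> R) : nat -> R :=
  fun i => match i with O => x | S i' => t i' end.

(* Integral over R^d as iterated improper Riemann integral
   (first coordinate outermost). *)
Fixpoint IntRd (d : nat) (F : (nat -> R) -> R) (v : R) : Prop :=
  match d with
  | O => v = F (fun _ => 0)
  | S d' => exists g : R -> R,
      (forall x, IntRd d' (fun t => F (vcons x t)) (g x)) /\ ImproperInt g v
  end.

Definition is_T (n d : nat) (Y : nat -> nat -> R) (gamma v : R) : Prop :=
  exists I, IntRd d (integrand n d Y gamma) I /\ v = INR n * I.

Definition lim_infty (f : R -> R) (L : R) : Prop :=
  forall eps, 0 < eps -> exists M, forall x, M < x -> Rabs (f x - L) < eps.

Definition b1d (n d : nat) (Y : nat -> nat -> R) : R :=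
  / (INR n ^ 2) * rsum n (fun j => rsum n (fun k => (dot d (Y j) (Y k)) ^ 3)).

Definition b1d_tilde (n d : nat) (Y : nat -> nat -> R) : R :=
  / (INR n ^ 2) * rsum n (fun j => rsum n (fun k =>
      dot d (Y j) (Y k) * nrm2 d (Y j) * nrm2 d (Y k))).

From Stdlib Require Import Reals Lra Lia Psatz FunctionalExtensionality.
From Coquelicot Require Import Coquelicot.
Open Scope R_scope.

(* Expanding the square, the integrand of T_{n,gamma} is (1/n^2) times a sum over (i, j, k) of
   (Y_{j,i} - t_i) (Y_{k,i} - t_i) exp ((Y_j + Y_k)^T t - gamma |t|^2), a product of
   one-dimensional Gaussian integrals.  Completing the square gives the closed form
     T_{n,gamma} = (pi/gamma)^{d/2} / n * sum_{j,k} (a_jk + d/(2 gamma) - S_jk/(2 gamma)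
                     + S_jk/(4 gamma^2)) exp (S_jk / (4 gamma)),
   with a_jk = Y_j^T Y_k and S_jk = |Y_j + Y_k|^2.  Expanding the exponential to second order
   in 1/gamma, the gamma^2 and gamma terms vanish after summation because the standardized sample
   satisfies sum_j Y_j = 0 and sum_j Y_j Y_j^T = n I, and the constant term sums to
   (2 b_{1,d} + b~_{1,d}) n^2 / 16.  The Gaussian integral itself comes from the identity
   (int_0^x e^{-u^2} du)^2 + int_0^1 e^{-x^2 (1 + t^2)} / (1 + t^2) dt = pi / 4. *)

(** * Finite sums and products *)

Fixpoint rprod (n : nat) (f : nat -> R) : R :=
  match n with O => 1 | S k => rprod k f * f k end.

Definition rsum2 (n : nat) (f : nat -> nat -> R) : R :=
  rsum n (fun j => rsum n (fun k => f j k)).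

Lemma rsum_ext n f g : (forall i, (i < n)%nat -> f i = g i) -> rsum n f = rsum n g.
Proof.
  induction n as [|n IH]; intros Hfg; simpl; [reflexivity|].
  rewrite IH, Hfg; auto with arith.
Qed.

Lemma rsum_plus n f g : rsum n (fun i => f i + g i) = rsum n f + rsum n g.
Proof. induction n as [|n IH]; simpl; [ring|]. rewrite IH. ring. Qed.

Lemma rsum_minus n f g : rsum n (fun i => f i - g i) = rsum n f - rsum n g.
Proof. induction n as [|n IH]; simpl; [ring|]. rewrite IH. ring. Qed.

Lemma rsum_scal_l n k f : rsum n (fun i => k * f i) = k * rsum n f.
Proof. induction n as [|n IH]; simpl; [ring|]. rewrite IH. ring. Qed.

Lemma rsum_scal_r n k f : rsum n (fun i => f i * k) = rsum n f * k.
Proof. induction n as [|n IH]; simpl; [ring|]. rewrite IH. ring. Qed.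

Lemma rsum_const n c : rsum n (fun _ => c) = INR n * c.
Proof. induction n as [|n IH]; cbn [rsum]; [simpl; ring|]. rewrite IH, S_INR. ring. Qed.

Lemma rsum_mult n m f g :
  rsum n f * rsum m g = rsum n (fun j => rsum m (fun k => f j * g k)).
Proof.
  induction n as [|n IH]; simpl; [ring|].
  rewrite Rmult_plus_distr_r, IH, rsum_scal_l. reflexivity.
Qed.

Lemma rsum_swap n m (f : nat -> nat -> R) :
  rsum n (fun i => rsum m (fun j => f i j)) = rsum m (fun j => rsum n (fun i => f i j)).
Proof.
  induction n as [|n IH]; simpl.
  - induction m as [|m IHm]; simpl; [reflexivity|]. rewrite <- IHm. ring.
  - rewrite IH, rsum_plus. reflexivity.
Qed.

Lemma rsum_kronecker n i (a : nat -> R) :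
  (i < n)%nat -> rsum n (fun l => if Nat.eqb i l then a l else 0) = a i.
Proof.
  induction n as [|n IH]; intros Hi; [lia|]. simpl.
  destruct (Nat.eqb_spec i n) as [->|Hne].
  - rewrite (rsum_ext n _ (fun _ => 0)), rsum_const; [ring|].
    intros l Hl. destruct (Nat.eqb_spec n l); [lia|reflexivity].
  - rewrite IH by lia. ring.
Qed.

Lemma rsum_nonneg n f : (forall i, (i < n)%nat -> 0 <= f i) -> 0 <= rsum n f.
Proof.
  induction n as [|n IH]; intros Hf; simpl; [lra|].
  pose proof (Hf n (Nat.lt_succ_diag_r n)).
  enough (0 <= rsum n f) by lra. apply IH. auto with arith.
Qed.

Lemma rsum_Rabs_le n f h :
  (forall i, (i < n)%nat -> Rabs (f i) <= h i) -> Rabs (rsum n f) <= rsum n h.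
Proof.
  induction n as [|n IH]; intros Hf; simpl; [rewrite Rabs_R0; lra|].
  eapply Rle_trans; [apply Rabs_triang|].
  pose proof (Hf n (Nat.lt_succ_diag_r n)).
  enough (Rabs (rsum n f) <= rsum n h) by lra. apply IH. auto with arith.
Qed.

Lemma rprod_ext n f g : (forall i, (i < n)%nat -> f i = g i) -> rprod n f = rprod n g.
Proof.
  induction n as [|n IH]; intros Hfg; simpl; [reflexivity|].
  rewrite IH, Hfg; auto with arith.
Qed.

Lemma rprod_mult n f g : rprod n (fun l => f l * g l) = rprod n f * rprod n g.
Proof. induction n as [|n IH]; simpl; [ring|]. rewrite IH. ring. Qed.

Lemma rprod_const n c : rprod n (fun _ => c) = c ^ n.
Proof. induction n as [|n IH]; simpl; [reflexivity|]. rewrite IH. ring. Qed.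

Lemma rprod_kronecker n i (a : nat -> R) :
  (i < n)%nat -> rprod n (fun l => if Nat.eqb l i then a l else 1) = a i.
Proof.
  induction n as [|n IH]; intros Hi; [lia|]. simpl.
  destruct (Nat.eqb_spec n i) as [->|Hne].
  - rewrite (rprod_ext i _ (fun _ => 1)), rprod_const, pow1; [ring|].
    intros l Hl. destruct (Nat.eqb_spec l i); [lia|reflexivity].
  - rewrite IH by lia. ring.
Qed.

Lemma rprod_S_l n f : rprod (S n) f = f 0%nat * rprod n (fun l => f (S l)).
Proof.
  induction n as [|n IH]; [simpl; ring|].
  change (rprod (S (S n)) f) with (rprod (S n) f * f (S n)). rewrite IH. simpl. ring.
Qed.

Lemma exp_rsum n f : exp (rsum n f) = rprod n (fun l => exp (f l)).
Proof. induction n as [|n IH]; simpl; [apply exp_0|]. rewrite exp_plus, IH. reflexivity. Qed.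

Lemma rsum2_ext n f g :
  (forall j k, (j < n)%nat -> (k < n)%nat -> f j k = g j k) -> rsum2 n f = rsum2 n g.
Proof. intros Hfg. apply rsum_ext. intros j Hj. apply rsum_ext. auto. Qed.

Lemma rsum2_plus n f g : rsum2 n (fun j k => f j k + g j k) = rsum2 n f + rsum2 n g.
Proof.
  unfold rsum2. rewrite <- rsum_plus. apply rsum_ext. intros. apply rsum_plus.
Qed.

Lemma rsum2_scal_l n c f : rsum2 n (fun j k => c * f j k) = c * rsum2 n f.
Proof.
  unfold rsum2. rewrite <- rsum_scal_l. apply rsum_ext. intros. apply rsum_scal_l.
Qed.

Lemma rsum2_transpose n f : rsum2 n f = rsum2 n (fun j k => f k j).
Proof. apply rsum_swap. Qed.

Lemma rsum2_Rabs_le n f h :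
  (forall j k, (j < n)%nat -> (k < n)%nat -> Rabs (f j k) <= h j k) ->
  Rabs (rsum2 n f) <= rsum2 n h.
Proof.
  intros Hf. apply rsum_Rabs_le. intros j Hj. apply rsum_Rabs_le. auto.
Qed.

Lemma rsum2_mult n f g : rsum2 n (fun j k => f j * g k) = rsum n f * rsum n g.
Proof. symmetry. apply rsum_mult. Qed.

Lemma rsum2_const_r n f : rsum2 n (fun j _ => f j) = INR n * rsum n f.
Proof.
  unfold rsum2. rewrite <- rsum_scal_l. apply rsum_ext. intros. rewrite rsum_const. ring.
Qed.

Lemma rsum2_const_l n f : rsum2 n (fun _ k => f k) = INR n * rsum n f.
Proof. rewrite rsum2_transpose. apply rsum2_const_r. Qed.

(* Real-valued instances of Coquelicot lemmas whose normed module is not inferred by unification. *)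
Lemma ex_derive_continuous_R (f : R -> R) x : ex_derive f x -> continuous f x.
Proof. apply (@ex_derive_continuous R_AbsRing R_NormedModule). Qed.

Lemma ex_RInt_continuous_R (f : R -> R) a b :
  (forall z, Rmin a b <= z <= Rmax a b -> continuous f z) -> ex_RInt f a b.
Proof. apply (@ex_RInt_continuous R_CompleteNormedModule). Qed.

Lemma RInt_correct_R (f : R -> R) a b : ex_RInt f a b -> is_RInt f a b (RInt f a b).
Proof. apply (@RInt_correct R_CompleteNormedModule). Qed.

Lemma is_RInt_unique_R (f : R -> R) a b l : is_RInt f a b l -> RInt f a b = l.
Proof. apply (@is_RInt_unique R_CompleteNormedModule). Qed.

Lemma RInt_ext_R (f g : R -> R) a b :
  (forall x, Rmin a b < x < Rmax a b -> f x = g x) -> RInt f a b = RInt g a b.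
Proof. apply (@RInt_ext R_CompleteNormedModule). Qed.

Lemma is_RInt_derive_R (f df : R -> R) a b :
  (forall x, Rmin a b <= x <= Rmax a b -> is_derive f x (df x)) ->
  (forall x, Rmin a b <= x <= Rmax a b -> continuous df x) ->
  is_RInt df a b (f b - f a).
Proof. apply (@is_RInt_derive R_CompleteNormedModule). Qed.

Lemma ex_RInt_plus_R (f g : R -> R) a b :
  ex_RInt f a b -> ex_RInt g a b -> ex_RInt (fun x => f x + g x) a b.
Proof. apply (@ex_RInt_plus R_CompleteNormedModule). Qed.

Lemma ex_RInt_scal_R (f : R -> R) a b k : ex_RInt f a b -> ex_RInt (fun x => k * f x) a b.
Proof. apply (@ex_RInt_scal R_CompleteNormedModule). Qed.

Lemma RInt_plus_R (f g : R -> R) a b : ex_RInt f a b -> ex_RInt g a b ->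
  RInt (fun x => f x + g x) a b = RInt f a b + RInt g a b.
Proof. apply (@RInt_plus R_CompleteNormedModule). Qed.

Lemma RInt_scal_R (f : R -> R) a b k :
  ex_RInt f a b -> RInt (fun x => k * f x) a b = k * RInt f a b.
Proof. apply (@RInt_scal R_CompleteNormedModule). Qed.

Lemma exp_le_compat x y : x <= y -> exp x <= exp y.
Proof. intros [Hlt|<-]; [left; apply exp_increasing, Hlt|apply Rle_refl]. Qed.

Lemma exp_opp_lt_inv y : 0 < y -> exp (- y) < / y.
Proof.
  intros Hy. rewrite exp_Ropp. apply Rinv_lt_contravar.
  - apply Rmult_lt_0_compat; [exact Hy|apply exp_pos].
  - pose proof (exp_ineq1_le y). lra.
Qed.

Lemma constant_of_derive_0 (f : R -> R) :
  (forall x, is_derive f x 0) -> forall x, f x = f 0.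
Proof.
  intros Hf x. destruct (MVT_gen f 0 x (fun _ => 0)) as [c [_ Hc]].
  - intros; apply Hf.
  - intros y _. apply continuity_pt_filterlim, ex_derive_continuous_R. exists 0. apply Hf.
  - lra.
Qed.

Lemma is_lim_affine_p_infty a b : 0 < a -> is_lim (fun x => a * x + b) p_infty p_infty.
Proof.
  intros Ha. apply is_lim_spec. intros M. exists ((M - b) / a). intros x Hx.
  apply Rmult_lt_compat_l with (r := a) in Hx; [|exact Ha].
  replace (a * ((M - b) / a)) with (M - b) in Hx by (field; lra). lra.
Qed.

Lemma is_lim_comp_affine_p_infty f l a b :
  0 < a -> is_lim f p_infty l -> is_lim (fun x => f (a * x + b)) p_infty l.
Proof.
  intros Ha Hf. apply (is_lim_comp f (fun x => a * x + b) p_infty l p_infty Hf).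
  - apply is_lim_affine_p_infty, Ha.
  - exists 0. easy.
Qed.

Lemma is_lim_affine_m_infty a b : 0 < a -> is_lim (fun x => a * x + b) m_infty m_infty.
Proof.
  intros Ha. apply is_lim_spec. intros M. exists ((M - b) / a). intros x Hx.
  apply Rmult_lt_compat_l with (r := a) in Hx; [|exact Ha].
  replace (a * ((M - b) / a)) with (M - b) in Hx by (field; lra). lra.
Qed.

Lemma is_lim_comp_affine_m_infty f l a b :
  0 < a -> is_lim f m_infty l -> is_lim (fun x => f (a * x + b)) m_infty l.
Proof.
  intros Ha Hf. apply (is_lim_comp f (fun x => a * x + b) m_infty l m_infty Hf).
  - apply is_lim_affine_m_infty, Ha.
  - exists 0. easy.
Qed.

Lemma is_lim_comp_opp_m_infty f l : is_lim f p_infty l -> is_lim (fun x => f (- x)) m_infty l.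
Proof.
  intros Hf. apply (is_lim_comp f (fun x => - x) m_infty l p_infty Hf).
  - apply (is_lim_opp (fun x => x) m_infty m_infty), is_lim_id.
  - exists 0. easy.
Qed.

(** * The Gaussian integral *)

Definition gauss (u : R) : R := exp (- (u * u)).
Definition gauss_prim (x : R) : R := RInt gauss 0 x.

(* Auxiliary function of the classical proof of the Gaussian integral:
   [gauss_prim x ^ 2 + gauss_aux x] has derivative zero. *)
Definition gauss_aux (x : R) : R :=
  RInt (fun t => exp (- (x * x) * (1 + t * t)) / (1 + t * t)) 0 1.

Lemma ex_RInt_gauss a b : ex_RInt gauss a b.
Proof.
  apply ex_RInt_continuous_R. intros z _. apply ex_derive_continuous_R.
  unfold gauss. auto_derive. exact I.
Qed.

Lemma is_derive_gauss_prim x : is_derive gauss_prim x (gauss x).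
Proof.
  apply is_derive_RInt with (a := 0).
  - apply filter_forall. intros b. apply RInt_correct_R, ex_RInt_gauss.
  - apply ex_derive_continuous_R. unfold gauss. auto_derive. exact I.
Qed.

Lemma gauss_prim_scale x : gauss_prim x = x * RInt (fun s => gauss (x * s)) 0 1.
Proof.
  unfold gauss_prim.
  assert (Hlin := RInt_comp_lin gauss x 0 0 1).
  rewrite Rmult_0_r, Rmult_1_r, !Rplus_0_r in Hlin.
  rewrite <- Hlin by apply ex_RInt_gauss.
  rewrite <- RInt_scal_R.
  - apply RInt_ext_R. intros s _. rewrite Rplus_0_r. reflexivity.
  - apply ex_RInt_continuous_R. intros z _. apply ex_derive_continuous_R.
    unfold gauss. auto_derive. exact I.
Qed.

Lemma one_plus_sqr_pos t : 0 < 1 + t * t.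
Proof. nra. Qed.

Lemma is_derive_gauss_aux x :
  is_derive gauss_aux x (-2 * x * exp (- (x * x)) * RInt (fun s => gauss (x * s)) 0 1).
Proof.
  set (k := fun u t => exp (- (u * u) * (1 + t * t)) / (1 + t * t)).
  assert (Hk : forall u t, Derive (fun z => k z t) u = -2 * u * exp (- (u * u) * (1 + t * t))).
  { intros u t. apply is_derive_unique. unfold k. pose proof (one_plus_sqr_pos t).
    auto_derive; [lra|]. field. lra. }
  replace (-2 * x * exp (- (x * x)) * RInt (fun s => gauss (x * s)) 0 1)
    with (RInt (fun t => Derive (fun u => k u t) x) 0 1).
  - apply (is_derive_RInt_param k).
    + apply filter_forall. intros u t _. unfold k. pose proof (one_plus_sqr_pos t).
      auto_derive. lra.
    + intros t _. eapply continuity_2d_pt_ext; [intros u v; symmetry; apply Hk|].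
      apply continuity_2d_pt_mult.
      * apply continuity_2d_pt_mult; [apply continuity_2d_pt_const|apply continuity_2d_pt_id1].
      * apply continuity_1d_2d_pt_comp; [apply derivable_continuous_pt, derivable_pt_exp|].
        apply continuity_2d_pt_mult.
        -- apply continuity_2d_pt_opp, continuity_2d_pt_mult; apply continuity_2d_pt_id1.
        -- apply continuity_2d_pt_plus; [apply continuity_2d_pt_const|].
           apply continuity_2d_pt_mult; apply continuity_2d_pt_id2.
    + apply filter_forall. intros u. apply ex_RInt_continuous_R. intros t _.
      apply ex_derive_continuous_R. unfold k. pose proof (one_plus_sqr_pos t).
      auto_derive. lra.
  - rewrite <- RInt_scal_R.
    + apply RInt_ext_R. intros t _. rewrite Hk. unfold gauss.
      replace (- (x * x) * (1 + t * t)) with (- (x * x) + - (x * t * (x * t))) by ring.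
      rewrite exp_plus. ring.
    + apply ex_RInt_continuous_R. intros z _. apply ex_derive_continuous_R.
      unfold gauss. auto_derive. exact I.
Qed.

Lemma gauss_aux_0 : gauss_aux 0 = PI / 4.
Proof.
  unfold gauss_aux. rewrite (RInt_ext_R _ (fun t => / (1 + t * t))).
  - rewrite (is_RInt_unique_R _ 0 1 (atan 1 - atan 0)); [rewrite atan_1, atan_0; lra|].
    apply (is_RInt_derive atan); intros x _.
    + apply is_derive_atan.
    + apply ex_derive_continuous_R. pose proof (one_plus_sqr_pos x). auto_derive. lra.
  - intros t _. pose proof (one_plus_sqr_pos t).
    rewrite Rmult_0_r, Ropp_0, Rmult_0_l, exp_0. field. lra.
Qed.

Lemma gauss_prim_sqr_plus_aux x : gauss_prim x * gauss_prim x + gauss_aux x = PI / 4.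
Proof.
  rewrite (constant_of_derive_0 (fun x => gauss_prim x * gauss_prim x + gauss_aux x)).
  - unfold gauss_prim. rewrite RInt_point, gauss_aux_0. unfold zero; simpl. ring.
  - intros y.
    replace 0 with (gauss y * gauss_prim y + gauss_prim y * gauss y
                    + (-2 * y * exp (- (y * y)) * RInt (fun s => gauss (y * s)) 0 1))
      by (rewrite gauss_prim_scale; unfold gauss; ring).
    apply (@is_derive_plus R_AbsRing R_NormedModule); [|apply is_derive_gauss_aux].
    apply (@is_derive_mult R_AbsRing); try apply is_derive_gauss_prim.
    intros; apply Rmult_comm.
Qed.

Lemma gauss_aux_bounds x : 0 <= gauss_aux x <= exp (- (x * x)).
Proof.
  assert (Hex : ex_RInt (fun t => exp (- (x * x) * (1 + t * t)) / (1 + t * t)) 0 1).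
  { apply ex_RInt_continuous_R. intros z _. apply ex_derive_continuous_R.
    pose proof (one_plus_sqr_pos z). auto_derive. lra. }
  unfold gauss_aux. split.
  - apply RInt_ge_0; [lra|exact Hex|]. intros t _.
    apply Rlt_le, Rdiv_lt_0_compat; [apply exp_pos|apply one_plus_sqr_pos].
  - replace (exp (- (x * x))) with (RInt (fun _ => exp (- (x * x))) 0 1)
      by (rewrite RInt_const; unfold scal; simpl; unfold mult; simpl; ring).
    apply RInt_le; [lra|exact Hex|apply ex_RInt_const|]. intros t _.
    pose proof (one_plus_sqr_pos t).
    assert (exp (- (x * x) * (1 + t * t)) <= exp (- (x * x))) by (apply exp_le_compat; nra).
    assert (/ (1 + t * t) <= 1) by (rewrite <- Rinv_1; apply Rinv_le_contravar; nra).
    pose proof (exp_pos (- (x * x) * (1 + t * t))). unfold Rdiv. nra.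
Qed.

Lemma gauss_prim_ge_0 x : 0 <= x -> 0 <= gauss_prim x.
Proof.
  intros Hx. apply RInt_ge_0; [exact Hx|apply ex_RInt_gauss|].
  intros. apply Rlt_le, exp_pos.
Qed.

Lemma gauss_prim_opp x : gauss_prim (- x) = - gauss_prim x.
Proof.
  assert (Hc := constant_of_derive_0 (fun x => gauss_prim (- x) + gauss_prim x)).
  enough (gauss_prim (- x) + gauss_prim x = 0) by lra.
  rewrite Hc, Ropp_0; [unfold gauss_prim; rewrite RInt_point; unfold zero; simpl; ring|].
  intros y. replace 0 with (-1 * gauss (- y) + gauss y)
    by (unfold gauss; replace (- y * - y) with (y * y) by ring; ring).
  apply (@is_derive_plus R_AbsRing R_NormedModule); [|apply is_derive_gauss_prim].
  apply (is_derive_comp gauss_prim (fun x => - x)); [apply is_derive_gauss_prim|].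
  replace (-1) with (- (1)) by ring.
  apply (@is_derive_opp R_AbsRing R_NormedModule), (@is_derive_id R_AbsRing).
Qed.

(* From [gauss_prim x ^ 2 = PI/4 - gauss_aux x] with [0 <= gauss_aux x <= exp (- x^2)]. *)
Lemma is_lim_gauss_prim_p_infty : is_lim gauss_prim p_infty (sqrt PI / 2).
Proof.
  apply is_lim_spec. intros eps.
  assert (Hs : 0 < sqrt PI) by (apply sqrt_lt_R0, PI_RGT_0).
  assert (Hsq : sqrt PI * sqrt PI = PI) by (apply sqrt_sqrt; pose proof PI_RGT_0; lra).
  pose proof (cond_pos eps) as Heps.
  exists (Rmax 1 (2 / (eps * sqrt PI))). intros x Hx.
  assert (H1 : 1 < x) by (eapply Rle_lt_trans; [apply Rmax_l|exact Hx]).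
  assert (H2 : 2 / (eps * sqrt PI) < x) by (eapply Rle_lt_trans; [apply Rmax_r|exact Hx]).
  pose proof (gauss_prim_sqr_plus_aux x) as Hid.
  pose proof (gauss_aux_bounds x) as [Ha0 Ha1].
  pose proof (gauss_prim_ge_0 x ltac:(lra)) as Hp.
  assert (Hexp : exp (- (x * x)) < / x).
  { eapply Rle_lt_trans; [apply exp_le_compat with (y := - x); nra|]. apply exp_opp_lt_inv. lra. }
  assert (Hinv : / x < eps * sqrt PI / 2).
  { replace (eps * sqrt PI / 2) with (/ (2 / (eps * sqrt PI))) by (field; lra).
    apply Rinv_lt_contravar; [|exact H2].
    apply Rmult_lt_0_compat; [|lra]. apply Rdiv_lt_0_compat; nra. }
  assert (Hprod : Rabs (gauss_prim x - sqrt PI / 2) * (gauss_prim x + sqrt PI / 2) = gauss_aux x).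
  { rewrite <- (Rabs_pos_eq (gauss_prim x + sqrt PI / 2)) by lra. rewrite <- Rabs_mult.
    replace ((gauss_prim x - sqrt PI / 2) * (gauss_prim x + sqrt PI / 2)) with (- gauss_aux x)
      by nra.
    rewrite Rabs_Ropp. apply Rabs_pos_eq. exact Ha0. }
  pose proof (Rabs_pos (gauss_prim x - sqrt PI / 2)). nra.
Qed.

(** * Improper integrals on R and iterated integrals on R^d *)

Lemma ImproperInt_of_derive (f F : R -> R) (Lp Lm : R) :
  (forall x, is_derive F x (f x)) -> (forall x, continuous f x) ->
  is_lim F p_infty Lp -> is_lim F m_infty Lm -> ImproperInt f (Lp - Lm).
Proof.
  intros HF Hf Hp Hm.
  assert (HI : forall a b, is_RInt f a b (F b - F a)) by (intros; apply is_RInt_derive_R; auto).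
  split.
  - intros a b. exists (ex_RInt_Reals_0 f a b (ex_intro _ _ (HI a b))). exact I.
  - intros eps Heps.
    apply is_lim_spec in Hp, Hm.
    assert (Heps2 : 0 < eps / 2) by lra.
    destruct (Hp (mkposreal _ Heps2)) as [M1 HM1], (Hm (mkposreal _ Heps2)) as [M2 HM2].
    simpl in HM1, HM2.
    exists (Rmax (M1 + 1) (1 - M2)). intros a b pr Ha Hb.
    rewrite <- RInt_Reals, (is_RInt_unique_R _ _ _ _ (HI a b)).
    assert (M1 < b) by (pose proof (Rmax_l (M1 + 1) (1 - M2)); lra).
    assert (a < M2) by (pose proof (Rmax_r (M1 + 1) (1 - M2)); lra).
    specialize (HM1 b H). specialize (HM2 a H0).
    replace (F b - F a - (Lp - Lm)) with ((F b - Lp) - (F a - Lm)) by ring.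
    eapply Rle_lt_trans; [apply Rabs_triang|]. rewrite Rabs_Ropp. lra.
Qed.

Lemma ImproperInt_unique f v w : ImproperInt f v -> ImproperInt f w -> v = w.
Proof.
  intros [Hex Hv] [_ Hw].
  destruct (Req_dec v w) as [|Hne]; [assumption|exfalso].
  set (e := Rabs (v - w) / 2).
  assert (He : 0 < e) by (apply Rdiv_lt_0_compat; [apply Rabs_pos_lt, Rminus_eq_contra|]; lra).
  destruct (Hv e He) as [M1 HM1]. destruct (Hw e He) as [M2 HM2].
  set (M := Rmax (Rabs M1) (Rabs M2)).
  pose proof (Rmax_l (Rabs M1) (Rabs M2)). pose proof (Rmax_r (Rabs M1) (Rabs M2)).
  pose proof (Rle_abs M1). pose proof (Rle_abs M2).
  destruct (Hex (- M) M) as [pr _].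
  specialize (HM1 (- M) M pr ltac:(unfold M; lra) ltac:(unfold M; lra)).
  specialize (HM2 (- M) M pr ltac:(unfold M; lra) ltac:(unfold M; lra)).
  assert (Rabs (v - w) <= Rabs (RiemannInt pr - w) + Rabs (RiemannInt pr - v)).
  { replace (v - w) with ((RiemannInt pr - w) + - (RiemannInt pr - v)) by ring.
    rewrite <- (Rabs_Ropp (RiemannInt pr - v)). apply Rabs_triang. }
  unfold e in *. lra.
Qed.

Lemma ImproperInt_plus f g v w :
  ImproperInt f v -> ImproperInt g w -> ImproperInt (fun x => f x + g x) (v + w).
Proof.
  intros [Hf Hfv] [Hg Hgw]. split.
  - intros a b. destruct (Hf a b) as [pf _], (Hg a b) as [pg _].
    exists (ex_RInt_Reals_0 _ _ _
              (ex_RInt_plus_R _ _ _ _ (ex_RInt_Reals_1 _ _ _ pf) (ex_RInt_Reals_1 _ _ _ pg))).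
    exact I.
  - intros eps Heps.
    destruct (Hfv (eps / 2) ltac:(lra)) as [M1 HM1], (Hgw (eps / 2) ltac:(lra)) as [M2 HM2].
    exists (Rmax M1 M2). intros a b pr Ha Hb.
    pose proof (Rmax_l M1 M2). pose proof (Rmax_r M1 M2).
    destruct (Hf a b) as [pf _], (Hg a b) as [pg _].
    specialize (HM1 a b pf ltac:(lra) ltac:(lra)). specialize (HM2 a b pg ltac:(lra) ltac:(lra)).
    rewrite <- RInt_Reals, RInt_plus_R by (apply ex_RInt_Reals_1; assumption).
    rewrite (RInt_Reals f a b pf), (RInt_Reals g a b pg).
    replace (RiemannInt pf + RiemannInt pg - (v + w))
      with ((RiemannInt pf - v) + (RiemannInt pg - w)) by ring.
    eapply Rle_lt_trans; [apply Rabs_triang|lra].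
Qed.

Lemma ImproperInt_scal f v k : ImproperInt f v -> ImproperInt (fun x => k * f x) (k * v).
Proof.
  intros [Hf Hfv]. split.
  - intros a b. destruct (Hf a b) as [pf _].
    exists (ex_RInt_Reals_0 _ _ _ (ex_RInt_scal_R _ _ _ k (ex_RInt_Reals_1 _ _ _ pf))). exact I.
  - intros eps Heps.
    assert (Hk : 0 < Rabs k + 1) by (pose proof (Rabs_pos k); lra).
    destruct (Hfv (eps / (Rabs k + 1))) as [M HM]; [apply Rdiv_lt_0_compat; assumption|].
    exists M. intros a b pr Ha Hb. destruct (Hf a b) as [pf _].
    specialize (HM a b pf Ha Hb).
    rewrite <- RInt_Reals, RInt_scal_R by (apply ex_RInt_Reals_1; assumption).
    rewrite (RInt_Reals f a b pf).
    replace (k * RiemannInt pf - k * v) with (k * (RiemannInt pf - v)) by ring.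
    rewrite Rabs_mult.
    apply Rle_lt_trans with ((Rabs k + 1) * Rabs (RiemannInt pf - v)).
    + pose proof (Rabs_pos (RiemannInt pf - v)). nra.
    + replace eps with ((Rabs k + 1) * (eps / (Rabs k + 1))) by (field; lra).
      apply Rmult_lt_compat_l; assumption.
Qed.

Lemma ImproperInt_0 : ImproperInt (fun _ => 0) 0.
Proof.
  assert (H0 := ImproperInt_of_derive (fun _ => 0) (fun _ => 0) 0 0).
  rewrite Rminus_0_r in H0. apply H0.
  - intros. apply (@is_derive_const R_AbsRing R_NormedModule).
  - intros. apply continuous_const.
  - apply is_lim_const.
  - apply is_lim_const.
Qed.

Lemma IntRd_unique d : forall F v w, IntRd d F v -> IntRd d F w -> v = w.
Proof.
  induction d as [|d IH]; simpl; intros F v w Hv Hw; [congruence|].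
  destruct Hv as [g [Hg Hgv]], Hw as [h [Hh Hhw]].
  assert (g = h) as <- by (apply functional_extensionality; intros x; eapply IH; eauto).
  eapply ImproperInt_unique; eassumption.
Qed.

Lemma IntRd_scal d : forall F v k, IntRd d F v -> IntRd d (fun t => k * F t) (k * v).
Proof.
  induction d as [|d IH]; simpl; intros F v k HF; [congruence|].
  destruct HF as [g [Hg Hgv]]. exists (fun x => k * g x). split.
  - intros x. apply (IH (fun t => F (vcons x t))), Hg.
  - apply ImproperInt_scal, Hgv.
Qed.

Lemma IntRd_plus d : forall F G v w,
  IntRd d F v -> IntRd d G w -> IntRd d (fun t => F t + G t) (v + w).
Proof.
  induction d as [|d IH]; simpl; intros F G v w HF HG; [congruence|].
  destruct HF as [f [Hf Hfv]], HG as [g [Hg Hgw]]. exists (fun x => f x + g x). split.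
  - intros x. apply (IH (fun t => F (vcons x t)) (fun t => G (vcons x t))); auto.
  - apply ImproperInt_plus; assumption.
Qed.

Lemma IntRd_0 d : IntRd d (fun _ => 0) 0.
Proof.
  induction d as [|d IH]; simpl; [reflexivity|].
  exists (fun _ => 0). split; [intros; exact IH|exact ImproperInt_0].
Qed.

Lemma IntRd_rsum d m : forall F v, (forall i, (i < m)%nat -> IntRd d (F i) (v i)) ->
  IntRd d (fun t => rsum m (fun i => F i t)) (rsum m v).
Proof.
  induction m as [|m IH]; simpl; intros F v HF; [apply IntRd_0|].
  apply (IntRd_plus d (fun t => rsum m (fun i => F i t)) (F m)); [apply IH; auto|apply HF; lia].
Qed.

(* Fubini for tensor products, built into the iterated definition of [IntRd]. *)
Lemma IntRd_rprod d : forall (h : nat -> R -> R) (v : nat -> R),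
  (forall l, (l < d)%nat -> ImproperInt (h l) (v l)) ->
  IntRd d (fun t => rprod d (fun l => h l (t l))) (rprod d v).
Proof.
  induction d as [|d IH]; intros h v Hh; [reflexivity|].
  exists (fun x => h 0%nat x * rprod d (fun l => v (S l))). split.
  - intros x.
    replace (fun t => rprod (S d) (fun l => h l (vcons x t l)))
      with (fun t => h 0%nat x * rprod d (fun l => h (S l) (t l)))
      by (apply functional_extensionality; intros t; rewrite rprod_S_l; reflexivity).
    apply (IntRd_scal d (fun t => rprod d (fun l => h (S l) (t l)))).
    apply (IH (fun l => h (S l))). intros; apply Hh; lia.
  - rewrite rprod_S_l, Rmult_comm.
    replace (fun x => h 0%nat x * rprod d (fun l => v (S l)))
      with (fun x => rprod d (fun l => v (S l)) * h 0%nat x)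
      by (apply functional_extensionality; intros; ring).
    apply ImproperInt_scal, Hh. lia.
Qed.

Lemma is_lim_gauss_prim_m_infty : is_lim gauss_prim m_infty (- (sqrt PI / 2)).
Proof.
  apply (is_lim_ext (fun x => - gauss_prim (- x))).
  { intros x. rewrite gauss_prim_opp. ring. }
  apply (is_lim_comp_opp_m_infty (fun x => - gauss_prim x)).
  apply (is_lim_opp gauss_prim p_infty (sqrt PI / 2)), is_lim_gauss_prim_p_infty.
Qed.

(** * One-dimensional Gaussian moments *)

Definition gauss_weight (g c x : R) : R := exp (c * x - g * x * x).
Definition gauss_mass (g c : R) : R := exp (c * c / (4 * g)) * (sqrt PI / sqrt g).

Lemma continuous_gauss_weight g c x : continuous (gauss_weight g c) x.
Proof. apply ex_derive_continuous_R. unfold gauss_weight. auto_derive. exact I. Qed.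

(* On [x >= max 1 ((|c| + 1) / g)] the exponent is at most [- x], and [exp (- x) < 4 / x^2]. *)
Lemma is_lim_poly_gauss_weight_p_infty g c B C :
  0 < g -> is_lim (fun x => (B + C * x) * gauss_weight g c x) p_infty 0.
Proof.
  intros Hg. apply is_lim_spec. intros [eps Heps]. simpl.
  set (K := Rabs B + Rabs C).
  assert (HK : 0 <= K) by (unfold K; pose proof (Rabs_pos B); pose proof (Rabs_pos C); lra).
  exists (Rmax 1 (Rmax ((Rabs c + 1) / g) (4 * K / eps))). intros x Hx.
  pose proof (Rmax_l 1 (Rmax ((Rabs c + 1) / g) (4 * K / eps))).
  pose proof (Rmax_r 1 (Rmax ((Rabs c + 1) / g) (4 * K / eps))).
  pose proof (Rmax_l ((Rabs c + 1) / g) (4 * K / eps)).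
  pose proof (Rmax_r ((Rabs c + 1) / g) (4 * K / eps)).
  assert (Hgx : Rabs c + 1 <= g * x).
  { apply Rmult_le_reg_r with (/ g); [apply Rinv_0_lt_compat, Hg|].
    replace (g * x * / g) with x by (field; lra). unfold Rdiv in *. lra. }
  assert (HKx : K * 4 < eps * x).
  { apply Rmult_lt_reg_r with (/ eps); [apply Rinv_0_lt_compat, Heps|].
    replace (eps * x * / eps) with x by (field; lra). unfold Rdiv in *. lra. }
  rewrite Rminus_0_r, Rabs_mult. unfold gauss_weight.
  rewrite (Rabs_pos_eq (exp _)) by apply Rlt_le, exp_pos.
  assert (HBC : Rabs (B + C * x) <= K * x).
  { eapply Rle_trans; [apply Rabs_triang|]. rewrite Rabs_mult, (Rabs_pos_eq x) by lra.
    unfold K. pose proof (Rabs_pos B). pose proof (Rabs_pos C). nra. }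
  assert (Hexp : exp (c * x - g * x * x) <= exp (- (x / 2)) * exp (- (x / 2))).
  { rewrite <- exp_plus. apply exp_le_compat.
    pose proof (Rle_abs c). pose proof (Rle_abs (- c)). rewrite Rabs_Ropp in *. nra. }
  pose proof (exp_opp_lt_inv (x / 2) ltac:(lra)) as Hhalf.
  pose proof (exp_pos (- (x / 2))).
  apply Rle_lt_trans with (K * x * (/ (x / 2) * / (x / 2))).
  - apply Rmult_le_compat; try apply Rabs_pos; try (apply Rlt_le, exp_pos).
    + exact HBC.
    + eapply Rle_trans; [exact Hexp|]. apply Rmult_le_compat; lra.
  - replace (K * x * (/ (x / 2) * / (x / 2))) with (K * 4 / x) by (field; lra).
    apply Rmult_lt_reg_r with x; [lra|]. unfold Rdiv. rewrite Rmult_assoc, Rinv_l, Rmult_1_r; lra.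
Qed.

Lemma is_lim_poly_gauss_weight_m_infty g c B C :
  0 < g -> is_lim (fun x => (B + C * x) * gauss_weight g c x) m_infty 0.
Proof.
  intros Hg.
  apply (is_lim_ext (fun x => (fun y => (B + - C * y) * gauss_weight g (- c) y) (- x))).
  - intros x. unfold gauss_weight. f_equal; [|f_equal]; ring.
  - apply (is_lim_comp_opp_m_infty (fun y => (B + - C * y) * gauss_weight g (- c) y)).
    apply is_lim_poly_gauss_weight_p_infty, Hg.
Qed.

Definition gauss_weight_prim (g c x : R) : R :=
  exp (c * c / (4 * g)) / sqrt g * gauss_prim (sqrt g * x - c / (2 * sqrt g)).

Lemma is_derive_gauss_weight_prim g c x :
  0 < g -> is_derive (gauss_weight_prim g c) x (gauss_weight g c x).
Proof.
  intros Hg. pose proof (sqrt_lt_R0 g Hg) as Hs. pose proof (sqrt_sqrt g (Rlt_le _ _ Hg)) as Hss.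
  replace (gauss_weight g c x)
    with (exp (c * c / (4 * g)) / sqrt g * (sqrt g * gauss (sqrt g * x - c / (2 * sqrt g)))).
  - unfold gauss_weight_prim.
    apply (is_derive_scal (fun x => gauss_prim (sqrt g * x - c / (2 * sqrt g)))).
    apply (is_derive_comp gauss_prim (fun x => sqrt g * x - c / (2 * sqrt g)) x).
    + apply is_derive_gauss_prim.
    + auto_derive; [exact I|ring].
  - unfold gauss, gauss_weight.
    replace (exp (c * c / (4 * g)) / sqrt g * (sqrt g * exp (- ((sqrt g * x - c / (2 * sqrt g))
               * (sqrt g * x - c / (2 * sqrt g))))))
      with (exp (c * c / (4 * g) + - ((sqrt g * x - c / (2 * sqrt g))
               * (sqrt g * x - c / (2 * sqrt g)))))
      by (rewrite exp_plus; field; lra).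
    f_equal. set (s := sqrt g) in *. clearbody s. subst g. field. lra.
Qed.

Lemma ImproperInt_gauss_weight g c : 0 < g -> ImproperInt (gauss_weight g c) (gauss_mass g c).
Proof.
  intros Hg. pose proof (sqrt_lt_R0 g Hg) as Hs.
  set (k := exp (c * c / (4 * g)) / sqrt g).
  replace (gauss_mass g c) with (k * (sqrt PI / 2) - k * (- (sqrt PI / 2)))
    by (unfold gauss_mass, k; field; lra).
  apply (ImproperInt_of_derive _ (gauss_weight_prim g c)).
  - intros x. apply is_derive_gauss_weight_prim, Hg.
  - apply continuous_gauss_weight.
  - unfold gauss_weight_prim. fold k.
    apply (is_lim_scal_l (fun x => gauss_prim (sqrt g * x - c / (2 * sqrt g))) k p_infty
             (sqrt PI / 2)).
    apply (is_lim_comp_affine_p_infty gauss_prim); [exact Hs|apply is_lim_gauss_prim_p_infty].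
  - unfold gauss_weight_prim. fold k.
    apply (is_lim_scal_l (fun x => gauss_prim (sqrt g * x - c / (2 * sqrt g))) k m_infty
             (- (sqrt PI / 2))).
    apply (is_lim_comp_affine_m_infty gauss_prim); [exact Hs|apply is_lim_gauss_prim_m_infty].
Qed.

Lemma ImproperInt_derive_poly_gauss_weight g c B C : 0 < g ->
  ImproperInt (fun x => (C + (B + C * x) * (c - 2 * g * x)) * gauss_weight g c x) 0.
Proof.
  intros Hg. rewrite <- (Rminus_0_r 0).
  apply (ImproperInt_of_derive _ (fun x => (B + C * x) * gauss_weight g c x)).
  - intros x. unfold gauss_weight. auto_derive; [exact I|]. unfold Rminus. ring.
  - intros x. apply ex_derive_continuous_R. unfold gauss_weight. auto_derive. exact I.
  - apply is_lim_poly_gauss_weight_p_infty, Hg.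
  - apply is_lim_poly_gauss_weight_m_infty, Hg.
Qed.

(* Mean [c / (2 g)] and variance [1 / (2 g)] of the normalised weight. *)
Lemma ImproperInt_quadratic_gauss_weight g c p q : 0 < g ->
  ImproperInt (fun x => (p - x) * (q - x) * gauss_weight g c x)
    ((p * q - (p + q) * c / (2 * g) + / (2 * g) + c * c / (4 * (g * g))) * gauss_mass g c).
Proof.
  intros Hg.
  set (A := p * q - (p + q) * c / (2 * g) + / (2 * g) + c * c / (4 * (g * g))).
  set (B := (p + q) / (2 * g) - c / (4 * (g * g))).
  set (C := - / (2 * g)).
  replace (fun x => (p - x) * (q - x) * gauss_weight g c x)
    with (fun x => A * gauss_weight g c x
                   + (C + (B + C * x) * (c - 2 * g * x)) * gauss_weight g c x).
  - rewrite <- (Rplus_0_r (A * gauss_mass g c)).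
    apply ImproperInt_plus.
    + apply ImproperInt_scal, ImproperInt_gauss_weight, Hg.
    + apply ImproperInt_derive_poly_gauss_weight, Hg.
  - apply functional_extensionality. intros x. unfold A, B, C. field. lra.
Qed.

(** * Closed form of the statistic *)

Definition gram (d : nat) (Y : nat -> nat -> R) (j k : nat) : R := dot d (Y j) (Y k).

Definition pair_term (a s dd g : R) : R :=
  (a + dd / (2 * g) - s / (2 * g) + s / (4 * (g * g))) * exp (s / (4 * g)).

Lemma sqr_rsum_scal n c w f :
  w * (c * rsum n f) ^ 2 = rsum2 n (fun j k => c * c * (f j * f k * w)).
Proof.
  replace (w * (c * rsum n f) ^ 2) with (c * c * (rsum n f * rsum n f * w)) by ring.
  rewrite rsum2_scal_l, rsum_mult, <- rsum_scal_r. f_equal.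
  apply rsum_ext. intros j _. symmetry. apply rsum_scal_r.
Qed.

Section ClosedForm.
Variables (n d : nat) (Y : nat -> nat -> R) (g : R).
Hypothesis g_pos : 0 < g.

Definition Ysum (j k : nat) : nat -> R := fun l => Y j l + Y k l.

(* The (i, j, k) term of the expanded integrand factorises over the coordinates [l]. *)
Definition coord_factor (i j k l : nat) (x : R) : R :=
  (if Nat.eqb l i then (Y j i - x) * (Y k i - x) else 1) * gauss_weight g (Ysum j k l) x.

Definition coord_mass (i j k l : nat) : R :=
  (if Nat.eqb l i
   then Y j i * Y k i - Ysum j k i * Ysum j k i / (2 * g) + / (2 * g)
        + Ysum j k i * Ysum j k i / (4 * (g * g))
   else 1) * gauss_mass g (Ysum j k l).

Lemma integrand_tensor t :
  integrand n d Y g t =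
  rsum d (fun i => rsum2 n (fun j k =>
    / (INR n * INR n) * rprod d (fun l => coord_factor i j k l (t l)))).
Proof.
  unfold integrand. rewrite <- rsum_scal_r. apply rsum_ext. intros i Hi.
  assert (Hdiff : Mn_grad n d Y t i - t i * Mn n d Y t =
                  / INR n * rsum n (fun j => (Y j i - t i) * exp (dot d t (Y j)))).
  { unfold Mn_grad, Mn.
    rewrite (rsum_ext n (fun j => (Y j i - t i) * exp (dot d t (Y j)))
                      (fun j => Y j i * exp (dot d t (Y j)) - t i * exp (dot d t (Y j))))
      by (intros; ring).
    rewrite rsum_minus, rsum_scal_l. ring. }
  rewrite Hdiff, Rmult_comm, sqr_rsum_scal. apply rsum2_ext. intros j k _ _.
  rewrite <- Rinv_mult. f_equal.
  unfold coord_factor. rewrite rprod_mult.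
  rewrite (rprod_kronecker d i (fun l => (Y j i - t l) * (Y k i - t l))) by exact Hi.
  unfold gauss_weight. rewrite <- exp_rsum.
  replace (rsum d (fun l => Ysum j k l * t l - g * t l * t l))
    with (dot d t (Y j) + dot d t (Y k) + - g * nrm2 d t).
  - rewrite !exp_plus. ring.
  - unfold nrm2, dot. rewrite <- rsum_scal_l, <- !rsum_plus.
    apply rsum_ext. intros. unfold Ysum. ring.
Qed.

Lemma ImproperInt_coord_factor i j k l : ImproperInt (coord_factor i j k l) (coord_mass i j k l).
Proof.
  unfold coord_factor, coord_mass. destruct (Nat.eqb_spec l i) as [->|_].
  - exact (ImproperInt_quadratic_gauss_weight g (Ysum j k i) (Y j i) (Y k i) g_pos).
  - replace (fun x => 1 * gauss_weight g (Ysum j k l) x) with (gauss_weight g (Ysum j k l))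
      by (apply functional_extensionality; intros; ring).
    rewrite Rmult_1_l. apply ImproperInt_gauss_weight, g_pos.
Qed.

Lemma IntRd_integrand_tensor :
  IntRd d (integrand n d Y g)
    (rsum d (fun i => rsum2 n (fun j k => / (INR n * INR n) * rprod d (coord_mass i j k)))).
Proof.
  rewrite (functional_extensionality _ _ integrand_tensor).
  apply IntRd_rsum. intros i _.
  apply IntRd_rsum. intros j _.
  apply IntRd_rsum. intros k _.
  apply (IntRd_scal d (fun t => rprod d (fun l => coord_factor i j k l (t l)))).
  apply IntRd_rprod. intros l _. apply ImproperInt_coord_factor.
Qed.

Lemma rprod_gauss_mass j k :
  rprod d (fun l => gauss_mass g (Ysum j k l))
  = exp (nrm2 d (Ysum j k) / (4 * g)) * (sqrt PI / sqrt g) ^ d.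
Proof.
  unfold gauss_mass. rewrite rprod_mult, rprod_const, <- exp_rsum. f_equal. f_equal.
  unfold nrm2, dot, Rdiv. rewrite <- rsum_scal_r. reflexivity.
Qed.

Lemma rsum_coord_mass :
  rsum d (fun i => rsum2 n (fun j k => / (INR n * INR n) * rprod d (coord_mass i j k)))
  = (sqrt PI / sqrt g) ^ d / (INR n * INR n) *
    rsum2 n (fun j k => pair_term (gram d Y j k) (nrm2 d (Ysum j k)) (INR d) g).
Proof.
  unfold rsum2. rewrite rsum_swap, <- rsum_scal_l. apply rsum_ext. intros j _.
  rewrite rsum_swap, <- rsum_scal_l. apply rsum_ext. intros k _.
  set (S := nrm2 d (Ysum j k)).
  transitivity (rsum d (fun i => (Y j i * Y k i + / (2 * g)
                   + (/ (4 * (g * g)) - / (2 * g)) * (Ysum j k i * Ysum j k i)))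
                * (exp (S / (4 * g)) * (sqrt PI / sqrt g) ^ d / (INR n * INR n))).
  - rewrite <- rsum_scal_r. apply rsum_ext. intros i Hi.
    unfold coord_mass. rewrite rprod_mult, rprod_kronecker, rprod_gauss_mass by exact Hi.
    fold S. unfold Rdiv. ring.
  - assert (HS : rsum d (fun i => Ysum j k i * Ysum j k i) = S) by reflexivity.
    rewrite !rsum_plus, rsum_const, rsum_scal_l, HS. unfold pair_term, gram, dot, Rdiv. ring.
Qed.

Lemma IntRd_integrand :
  IntRd d (integrand n d Y g)
    ((sqrt PI / sqrt g) ^ d / (INR n * INR n) *
     rsum2 n (fun j k => pair_term (gram d Y j k) (nrm2 d (Ysum j k)) (INR d) g)).
Proof. rewrite <- rsum_coord_mass. apply IntRd_integrand_tensor. Qed.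

End ClosedForm.

Lemma Rpower_gauss_normalisation d g : 0 < g ->
  Rpower g (2 + INR d / 2) * (sqrt PI / sqrt g) ^ d = g * g * Rpower PI (INR d / 2).
Proof.
  intros Hg. pose proof (sqrt_lt_R0 g Hg).
  assert (Hsqrt : forall x, 0 < x -> sqrt x ^ d = Rpower x (INR d / 2)).
  { intros x Hx.
    rewrite <- Rpower_sqrt, <- Rpower_pow, Rpower_mult by (try apply exp_pos; exact Hx).
    f_equal. field. }
  unfold Rdiv at 2. rewrite Rpow_mult_distr, pow_inv, !Hsqrt by (try apply PI_RGT_0; exact Hg).
  rewrite Rpower_plus. replace 2 with (INR 2) at 1 by reflexivity. rewrite Rpower_pow by exact Hg.
  assert (0 < Rpower g (INR d / 2)) by apply exp_pos.
  field. lra.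
Qed.

(** * Expansion in 1 / gamma *)

Lemma exp_taylor2 x : 0 <= x -> Rabs (exp x - 1 - x - x * x / 2) <= x * x * x * exp x / 6.
Proof.
  intros [Hx|<-]; [|rewrite exp_0; replace (1 - 1 - 0 - 0 * 0 / 2) with 0 by field;
                     rewrite Rabs_R0; lra].
  destruct (Taylor_Lagrange exp 2 0 x Hx) as [z [Hz Hexp]].
  { intros t _ k _. destruct k; [exact I|]. exists (exp t). apply (is_derive_n_exp (S k) t). }
  assert (HD : forall m y, Derive_n exp m y = exp y)
    by (intros; apply is_derive_n_unique, is_derive_n_exp).
  cbn [sum_f_R0] in Hexp. rewrite !HD in Hexp. simpl in Hexp. rewrite exp_0 in Hexp.
  replace (exp x - 1 - x - x * x / 2) with (x * x * x * exp z / 6) by (rewrite Hexp; field).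
  pose proof (exp_pos z). pose proof (exp_le_compat z x ltac:(lra)).
  assert (0 <= x * x * x) by (apply Rmult_le_pos; nra).
  rewrite Rabs_pos_eq by (apply Rmult_le_pos; [apply Rmult_le_pos|]; lra).
  apply Rmult_le_compat_r; [lra|]. apply Rmult_le_compat_l; lra.
Qed.

Lemma exp_taylor2_div u g : 0 <= u -> 1 <= g ->
  Rabs (exp (u / g) - 1 - u / g - u / g * (u / g) / 2) <= (u * u * u * exp u / 6) / (g * g * g).
Proof.
  intros Hu Hg. set (x := u / g).
  assert (Hx : 0 <= x <= u).
  { unfold x. split; [apply Rdiv_le_0_compat; lra|].
    apply Rmult_le_reg_r with g; [lra|]. replace (u / g * g) with u by (field; lra). nra. }
  eapply Rle_trans; [apply exp_taylor2; lra|].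
  replace (u * u * u * exp u / 6 / (g * g * g)) with (x * x * x * exp u / 6)
    by (unfold x; field; lra).
  pose proof (exp_le_compat x u ltac:(lra)). assert (0 <= x * x * x) by (apply Rmult_le_pos; nra).
  apply Rmult_le_compat_r; [lra|]. apply Rmult_le_compat_l; lra.
Qed.

Lemma Rabs_poly_inv_le a b u g : 0 <= u -> 1 <= g ->
  Rabs (a + b / g + u / (g * g)) <= Rabs a + Rabs b + u.
Proof.
  intros Hu Hg. eapply Rle_trans; [apply Rabs_triang|].
  eapply Rle_trans; [apply Rplus_le_compat_r, Rabs_triang|].
  unfold Rdiv.
  rewrite !Rabs_mult, !Rabs_inv, (Rabs_pos_eq u), (Rabs_pos_eq (g * g)), (Rabs_pos_eq g) by nra.
  assert (/ g <= 1) by (rewrite <- Rinv_1; apply Rinv_le_contravar; lra).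
  assert (/ (g * g) <= 1) by (rewrite <- Rinv_1; apply Rinv_le_contravar; nra).
  assert (0 < / g) by (apply Rinv_0_lt_compat; lra).
  pose proof (Rabs_pos b). nra.
Qed.

Section PairTermExpansion.
Variables (a s dd : R).

Let u := s / 4.
Let b := dd / 2 - s / 2.

Definition pair_term_lin : R := a * u + b.
Definition pair_term_const : R := a * u * u / 2 + b * u + u.
Definition pair_term_err : R :=
  Rabs (b * u * u / 2 + u * u) + u * u * u / 2 + (Rabs a + Rabs b + u) * (u * u * u * exp u / 6).

(* Second-order Taylor expansion of [exp (s / (4 g))] in [1 / g]. *)
Lemma pair_term_expansion g : 0 <= s -> 1 <= g ->
  Rabs (g * g * pair_term a s dd g - (g * g * a + g * pair_term_lin + pair_term_const))
  <= pair_term_err / g.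
Proof.
  intros Hs Hg. unfold pair_term_lin, pair_term_const, pair_term_err.
  assert (Hu : 0 <= u) by (unfold u; lra).
  set (x := u / g). set (Rem := exp x - 1 - x - x * x / 2).
  set (c := a + b / g + u / (g * g)).
  assert (Hid : g * g * pair_term a s dd g
                - (g * g * a + g * (a * u + b) + (a * u * u / 2 + b * u + u))
                = (b * u * u / 2 + u * u) / g + (u * u * u / 2) / (g * g) + g * g * c * Rem).
  { unfold pair_term, Rem, c, x, b, u. replace (s / (4 * g)) with (s / 4 / g) by (field; lra).
    field. lra. }
  pose proof (Rabs_poly_inv_le a b u g Hu Hg) as Hc. fold c in Hc.
  pose proof (exp_taylor2_div u g Hu Hg) as HRem. fold x Rem in HRem.
  rewrite Hid.
  eapply Rle_trans; [apply Rabs_triang|].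
  eapply Rle_trans; [apply Rplus_le_compat_r, Rabs_triang|].
  unfold Rdiv. rewrite !Rabs_mult, !Rabs_inv, (Rabs_pos_eq g), (Rabs_pos_eq (g * g)) by nra.
  rewrite (Rabs_pos_eq u), (Rabs_pos_eq 2) by lra.
  assert (Hg1 : / (g * g) <= / g) by (apply Rinv_le_contravar; nra).
  assert (Hg0 : 0 < / g) by (apply Rinv_0_lt_compat; lra).
  assert (Hcube : 0 <= u * u * u) by (apply Rmult_le_pos; nra).
  assert (Hlast : g * g * Rabs c * Rabs Rem
                  <= (Rabs a + Rabs b + u) * (u * u * u * exp u / 6) * / g).
  { apply Rle_trans with (g * g * (Rabs a + Rabs b + u) * ((u * u * u * exp u / 6) / (g * g * g))).
    - apply Rmult_le_compat; try apply Rabs_pos; [|apply Rmult_le_compat_l; nra|exact HRem].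
      apply Rmult_le_pos; [nra|apply Rabs_pos].
    - right. field. lra. }
  pose proof (Rabs_pos (b * u * u / 2 + u * u)).
  assert (u * u * u * / 2 * / (g * g) <= u * u * u * / 2 * / g) by (apply Rmult_le_compat_l; nra).
  lra.
Qed.

End PairTermExpansion.

Lemma pair_term_err_nonneg a s dd : 0 <= s -> 0 <= pair_term_err a s dd.
Proof.
  intros Hs. unfold pair_term_err.
  assert (0 <= s / 4) by lra. pose proof (exp_pos (s / 4)).
  pose proof (Rabs_pos a). pose proof (Rabs_pos (dd / 2 - s / 2)).
  pose proof (Rabs_pos ((dd / 2 - s / 2) * (s / 4) * (s / 4) / 2 + s / 4 * (s / 4))).
  assert (0 <= s / 4 * (s / 4) * (s / 4)) by (apply Rmult_le_pos; nra).
  assert (0 <= s / 4 * (s / 4) * (s / 4) * exp (s / 4) / 6) by (apply Rdiv_le_0_compat; nra).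
  nra.
Qed.

(* The [g^2] and [g] terms of the expansion cancel after summation. *)
Lemma is_lim_rsum2_pair_term n (a S : nat -> nat -> R) dd :
  (forall j k, 0 <= S j k) ->
  rsum2 n a = 0 ->
  rsum2 n (fun j k => pair_term_lin (a j k) (S j k) dd) = 0 ->
  is_lim (fun g => g * g * rsum2 n (fun j k => pair_term (a j k) (S j k) dd g)) p_infty
         (rsum2 n (fun j k => pair_term_const (a j k) (S j k) dd)).
Proof.
  intros HS Ha Hlin. apply is_lim_spec. intros [eps Heps]. simpl.
  set (E := rsum2 n (fun j k => pair_term_err (a j k) (S j k) dd)).
  assert (HE : 0 <= E) by (apply rsum_nonneg; intros; apply rsum_nonneg; intros;
                           apply pair_term_err_nonneg, HS).
  exists (Rmax 1 (E / eps)). intros g Hg.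
  pose proof (Rmax_l 1 (E / eps)). pose proof (Rmax_r 1 (E / eps)).
  assert (Hsplit : g * g * rsum2 n (fun j k => pair_term (a j k) (S j k) dd g)
                   - rsum2 n (fun j k => pair_term_const (a j k) (S j k) dd)
                   = rsum2 n (fun j k => g * g * pair_term (a j k) (S j k) dd g
                       - (g * g * a j k + g * pair_term_lin (a j k) (S j k) dd
                          + pair_term_const (a j k) (S j k) dd))).
  { rewrite (rsum2_ext n (fun j k => g * g * pair_term (a j k) (S j k) dd g
                       - (g * g * a j k + g * pair_term_lin (a j k) (S j k) dd
                          + pair_term_const (a j k) (S j k) dd))
                         (fun j k => g * g * pair_term (a j k) (S j k) dd g
                                + -1 * pair_term_const (a j k) (S j k) dd
                                + - (g * g) * a j k + - g * pair_term_lin (a j k) (S j k) dd))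
      by (intros; ring).
    rewrite !rsum2_plus, !rsum2_scal_l, Ha, Hlin. ring. }
  rewrite Hsplit.
  eapply Rle_lt_trans.
  { apply rsum2_Rabs_le. intros j k _ _. apply pair_term_expansion; [apply HS|lra]. }
  unfold Rdiv. rewrite (rsum2_ext n _ (fun j k => / g * pair_term_err (a j k) (S j k) dd))
    by (intros; ring).
  rewrite rsum2_scal_l. fold E.
  apply Rmult_lt_reg_l with g; [lra|]. rewrite <- Rmult_assoc, Rinv_r, Rmult_1_l by lra.
  apply Rmult_lt_reg_r with (/ eps); [apply Rinv_0_lt_compat, Heps|].
  replace (g * eps * / eps) with g by (field; lra). unfold Rdiv in *. lra.
Qed.

(** * Moments of the standardized sample *)

Section MatrixAlgebra.
Variable d : nat.

Definition mat_id (i k : nat) : R := if Nat.eqb i k then 1 else 0.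

Lemma mat_mul_id_r P i k : (k < d)%nat -> mat_mul d P mat_id i k = P i k.
Proof.
  intros Hk. unfold mat_mul, mat_id.
  rewrite (rsum_ext d _ (fun l => if Nat.eqb k l then P i l else 0)).
  - apply (rsum_kronecker d k (fun l => P i l)), Hk.
  - intros l _. rewrite Nat.eqb_sym. destruct (Nat.eqb k l); ring.
Qed.

Lemma mat_mul_assoc P Q T i k :
  mat_mul d (mat_mul d P Q) T i k = mat_mul d P (mat_mul d Q T) i k.
Proof.
  unfold mat_mul.
  rewrite (rsum_ext d _ (fun l => rsum d (fun r => P i r * Q r l * T l k)))
    by (intros; rewrite <- rsum_scal_r; reflexivity).
  rewrite rsum_swap. apply rsum_ext. intros r _. rewrite <- rsum_scal_l.
  apply rsum_ext. intros. ring.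
Qed.

Lemma mat_mul_ext P P' Q Q' i k :
  (forall a b, (a < d)%nat -> (b < d)%nat -> P a b = P' a b) ->
  (forall a b, (a < d)%nat -> (b < d)%nat -> Q a b = Q' a b) ->
  (i < d)%nat -> (k < d)%nat -> mat_mul d P Q i k = mat_mul d P' Q' i k.
Proof. intros HP HQ Hi Hk. apply rsum_ext. intros l Hl. rewrite HP, HQ; auto. Qed.

Lemma mat_mul_transpose P Q i k : sym_mat d P -> sym_mat d Q ->
  (i < d)%nat -> (k < d)%nat -> mat_mul d P Q i k = mat_mul d Q P k i.
Proof.
  intros HP HQ Hi Hk. apply rsum_ext. intros l Hl. rewrite (HP i l), (HQ l k) by auto. ring.
Qed.

(* With [M := A A] a right inverse of [S], [S M = I] by symmetry; then [(A S A) A = A], and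
   [A S A = (A S A) M S = A A S = I]. *)
Lemma mat_sandwich_sqrt_inv A S i k : sym_mat d A -> sym_mat d S ->
  is_inverse d (mat_mul d A A) S -> (i < d)%nat -> (k < d)%nat ->
  mat_mul d (mat_mul d A S) A i k = mat_id i k.
Proof.
  intros HA HS Hinv Hi Hk.
  assert (HM : sym_mat d (mat_mul d A A)).
  { intros a b Ha Hb. rewrite mat_mul_transpose by assumption. reflexivity. }
  assert (HSM : forall a b, (a < d)%nat -> (b < d)%nat ->
                 mat_mul d S (mat_mul d A A) a b = mat_id a b).
  { intros a b Ha Hb. rewrite mat_mul_transpose, Hinv by assumption.
    unfold mat_id. rewrite Nat.eqb_sym. reflexivity. }
  set (N := mat_mul d (mat_mul d A S) A).
  assert (HNA : forall a b, (a < d)%nat -> (b < d)%nat -> mat_mul d N A a b = A a b).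
  { intros a b Ha Hb. unfold N. rewrite !mat_mul_assoc.
    rewrite (mat_mul_ext A A _ mat_id) by (auto; intros; rewrite <- mat_mul_assoc; auto).
    apply mat_mul_id_r, Hb. }
  rewrite <- (mat_mul_id_r N i k Hk).
  rewrite (mat_mul_ext N N mat_id (mat_mul d (mat_mul d A A) S))
    by (auto; intros; rewrite Hinv by assumption; reflexivity).
  rewrite <- mat_mul_assoc, (mat_mul_ext _ (mat_mul d A A) S S) by
    (auto; intros a b Ha Hb; rewrite <- mat_mul_assoc; apply mat_mul_ext; auto).
  apply Hinv; assumption.
Qed.

End MatrixAlgebra.

Lemma rsum_centered n X l :
  (0 < n)%nat -> rsum n (fun j => X j l - sample_mean n X l) = 0.
Proof.
  intros Hn. rewrite rsum_minus, rsum_const. unfold sample_mean. field. apply not_0_INR. lia.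
Qed.

Lemma rsum_centered_mult n X l r : (0 < n)%nat ->
  rsum n (fun j => (X j l - sample_mean n X l) * (X j r - sample_mean n X r))
  = INR n * sample_cov n X l r.
Proof. intros Hn. unfold sample_cov. field. apply not_0_INR. lia. Qed.

Lemma sample_cov_sym n d X : sym_mat d (sample_cov n X).
Proof. intros i k _ _. unfold sample_cov. f_equal. apply rsum_ext. intros. ring. Qed.

Lemma rsum_Yres n d A X i : (0 < n)%nat -> rsum n (fun j => Yres n d A X j i) = 0.
Proof.
  intros Hn. unfold Yres. rewrite rsum_swap.
  rewrite (rsum_ext d _ (fun _ => 0)), rsum_const; [ring|].
  intros l _. rewrite rsum_scal_l, rsum_centered by exact Hn. ring.
Qed.

Lemma rsum_Yres_mult n d A X i m : (0 < n)%nat -> sym_mat d A ->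
  is_inverse d (mat_mul d A A) (sample_cov n X) -> (i < d)%nat -> (m < d)%nat ->
  rsum n (fun j => Yres n d A X j i * Yres n d A X j m) = if Nat.eqb i m then INR n else 0.
Proof.
  intros Hn HA Hinv Hi Hm.
  transitivity (INR n * mat_id i m); [|unfold mat_id; destruct (Nat.eqb i m); ring].
  rewrite <- (mat_sandwich_sqrt_inv d A (sample_cov n X) i m HA (sample_cov_sym n d X) Hinv Hi Hm).
  unfold Yres, mat_mul.
  set (Z := fun j l => X j l - sample_mean n X l).
  transitivity (rsum d (fun l => rsum d (fun r =>
                  A i l * A m r * rsum n (fun j => Z j l * Z j r)))).
  - rewrite (rsum_ext n _ (fun j => rsum d (fun l => rsum d (fun r =>
                                      A i l * A m r * (Z j l * Z j r)))))
      by (intros; rewrite rsum_mult; apply rsum_ext; intros; apply rsum_ext; intros;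
          unfold Z; ring).
    rewrite rsum_swap. apply rsum_ext. intros l _.
    rewrite rsum_swap. apply rsum_ext. intros r _. apply rsum_scal_l.
  - rewrite rsum_swap, <- rsum_scal_l. apply rsum_ext. intros r Hr.
    rewrite <- rsum_scal_r, <- rsum_scal_l. apply rsum_ext. intros l Hl.
    unfold Z. rewrite rsum_centered_mult, (HA r m) by assumption. ring.
Qed.

Lemma gram_sym d Y j k : gram d Y j k = gram d Y k j.
Proof. apply rsum_ext. intros. ring. Qed.

Lemma nrm2_Ysum d Y j k :
  nrm2 d (Ysum Y j k) = gram d Y j j + gram d Y k k + 2 * gram d Y j k.
Proof.
  unfold nrm2, gram, dot, Ysum. rewrite <- !rsum_plus, <- rsum_scal_l, <- rsum_plus.
  apply rsum_ext. intros. ring.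
Qed.

Section StandardizedMoments.
Variables (n d : nat) (Y : nat -> nat -> R).
Hypothesis Y_centered : forall i, (i < d)%nat -> rsum n (fun j => Y j i) = 0.
Hypothesis Y_whitened : forall i m, (i < d)%nat -> (m < d)%nat ->
  rsum n (fun j => Y j i * Y j m) = if Nat.eqb i m then INR n else 0.

Local Notation a := (gram d Y).

Lemma rsum_gram_r j : rsum n (fun k => a j k) = 0.
Proof.
  unfold gram, dot. rewrite rsum_swap.
  rewrite (rsum_ext d _ (fun _ => 0)), rsum_const; [ring|].
  intros i Hi. rewrite rsum_scal_l, Y_centered by exact Hi. ring.
Qed.

Lemma rsum_gram_mult j m : rsum n (fun k => a j k * a k m) = INR n * a j m.
Proof.
  unfold gram, dot.
  rewrite (rsum_ext n _ (fun k => rsum d (fun i => rsum d (fun l =>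
                                    Y j i * Y m l * (Y k i * Y k l)))))
    by (intros; rewrite rsum_mult; apply rsum_ext; intros; apply rsum_ext; intros; ring).
  rewrite rsum_swap, <- rsum_scal_l. apply rsum_ext. intros i Hi.
  rewrite rsum_swap.
  rewrite (rsum_ext d _ (fun l => if Nat.eqb i l then INR n * (Y j i * Y m l) else 0)).
  - rewrite (rsum_kronecker d i (fun l => INR n * (Y j i * Y m l))) by exact Hi. ring.
  - intros l Hl. rewrite rsum_scal_l, Y_whitened by assumption. destruct (Nat.eqb i l); ring.
Qed.

Lemma rsum_gram_diag : rsum n (fun j => a j j) = INR n * INR d.
Proof.
  unfold gram, dot. rewrite rsum_swap.
  rewrite (rsum_ext d _ (fun _ => INR n)), rsum_const; [ring|].
  intros i Hi. rewrite Y_whitened, Nat.eqb_refl by exact Hi. reflexivity.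
Qed.

Lemma rsum2_gram_l f : rsum2 n (fun j k => a j k * f j) = 0.
Proof.
  unfold rsum2. rewrite (rsum_ext n _ (fun _ => 0)), rsum_const; [ring|].
  intros j _. rewrite (rsum_ext n _ (fun k => f j * a j k)) by (intros; ring).
  rewrite rsum_scal_l, rsum_gram_r. ring.
Qed.

Lemma rsum2_gram_r f : rsum2 n (fun j k => a j k * f k) = 0.
Proof.
  rewrite rsum2_transpose, (rsum2_ext n _ (fun j k => a j k * f j))
    by (intros; rewrite gram_sym; reflexivity).
  apply rsum2_gram_l.
Qed.

Lemma rsum2_gram_sqr_l f :
  rsum2 n (fun j k => a j k * a j k * f j) = INR n * rsum n (fun j => a j j * f j).
Proof.
  unfold rsum2. rewrite <- rsum_scal_l. apply rsum_ext. intros j _.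
  rewrite (rsum_ext n _ (fun k => f j * (a j k * a k j)))
    by (intros k _; rewrite (gram_sym d Y k j); ring).
  rewrite rsum_scal_l, rsum_gram_mult. ring.
Qed.

Lemma rsum2_gram_sqr_r f :
  rsum2 n (fun j k => a j k * a j k * f k) = INR n * rsum n (fun j => a j j * f j).
Proof.
  rewrite rsum2_transpose, (rsum2_ext n _ (fun j k => a j k * a j k * f j))
    by (intros; rewrite gram_sym; reflexivity).
  apply rsum2_gram_sqr_l.
Qed.

Lemma rsum2_gram : rsum2 n a = 0.
Proof.
  unfold rsum2. rewrite (rsum_ext n _ (fun _ => 0)), rsum_const; [ring|].
  intros j _. apply rsum_gram_r.
Qed.

Lemma rsum2_gram_sqr : rsum2 n (fun j k => a j k * a j k) = INR n * (INR n * INR d).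
Proof.
  rewrite (rsum2_ext n _ (fun j k => a j k * a j k * 1)) by (intros; ring).
  rewrite rsum2_gram_sqr_l, <- rsum_gram_diag. f_equal. apply rsum_ext. intros. ring.
Qed.

Lemma rsum2_pair_term_lin_gram :
  rsum2 n (fun j k => pair_term_lin (a j k) (nrm2 d (Ysum Y j k)) (INR d)) = 0.
Proof.
  rewrite (rsum2_ext n _ (fun j k => / 4 * (a j k * a j j) + / 4 * (a j k * a k k)
     + / 2 * (a j k * a j k) + INR d / 2 * 1 + - / 2 * a j j + - / 2 * a k k + -1 * (a j k * 1)))
    by (intros; unfold pair_term_lin; rewrite nrm2_Ysum; field).
  rewrite !rsum2_plus, !rsum2_scal_l, rsum2_gram_sqr, rsum2_const_r, rsum_const.
  rewrite (rsum2_gram_l (fun j => a j j)), (rsum2_gram_r (fun k => a k k)).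
  rewrite (rsum2_gram_l (fun _ => 1)).
  rewrite (rsum2_const_r n (fun j => a j j)), (rsum2_const_l n (fun k => a k k)), rsum_gram_diag.
  field.
Qed.

Lemma rsum2_pair_term_const_gram :
  rsum2 n (fun j k => pair_term_const (a j k) (nrm2 d (Ysum Y j k)) (INR d))
  = / 8 * rsum2 n (fun j k => a j k * a j k * a j k)
    + / 16 * rsum2 n (fun j k => a j k * a j j * a k k).
Proof.
  set (P2 := rsum n (fun j => a j j * a j j)).
  rewrite (rsum2_ext n _ (fun j k =>
       / 32 * (a j k * (a j j * a j j)) + / 32 * (a j k * (a k k * a k k))
     + / 8 * (a j k * a j k * a j k) + / 16 * (a j k * a j j * a k k)
     + / 8 * (a j k * a j k * a j j) + / 8 * (a j k * a j k * a k k)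
     + - / 8 * (a j j * a j j) + - / 8 * (a k k * a k k) + - / 2 * (a j k * a j k)
     + - / 4 * (a j j * a k k) + - / 2 * (a j k * a j j) + - / 2 * (a j k * a k k)
     + (2 * INR d + 4) / 16 * a j j + (2 * INR d + 4) / 16 * a k k
     + (2 * INR d + 4) / 8 * (a j k * 1)))
    by (intros; unfold pair_term_const; rewrite nrm2_Ysum; field).
  rewrite !rsum2_plus, !rsum2_scal_l.
  rewrite (rsum2_gram_l (fun j => a j j * a j j)), (rsum2_gram_r (fun k => a k k * a k k)).
  rewrite (rsum2_gram_l (fun j => a j j)), (rsum2_gram_r (fun k => a k k)).
  rewrite (rsum2_gram_l (fun _ => 1)).
  rewrite (rsum2_gram_sqr_l (fun j => a j j)), (rsum2_gram_sqr_r (fun k => a k k)), rsum2_gram_sqr.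
  rewrite (rsum2_const_r n (fun j => a j j * a j j)), (rsum2_const_l n (fun k => a k k * a k k)).
  rewrite (rsum2_mult n (fun j => a j j) (fun k => a k k)).
  rewrite (rsum2_const_r n (fun j => a j j)), (rsum2_const_l n (fun k => a k k)), rsum_gram_diag.
  fold P2. field.
Qed.

End StandardizedMoments.

Lemma b1d_combination n d Y : (0 < n)%nat ->
  16 / (INR n * INR n) * (/ 8 * rsum2 n (fun j k => gram d Y j k * gram d Y j k * gram d Y j k)
                          + / 16 * rsum2 n (fun j k => gram d Y j k * gram d Y j j * gram d Y k k))
  = 2 * b1d n d Y + b1d_tilde n d Y.
Proof.
  intros Hn. assert (INR n <> 0) by (apply not_0_INR; lia).
  unfold b1d, b1d_tilde.
  rewrite (rsum2_ext n (fun j k => gram d Y j k * gram d Y j k * gram d Y j k)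
                       (fun j k => dot d (Y j) (Y k) ^ 3)) by (intros; unfold gram; ring).
  unfold rsum2, gram, nrm2. field. assumption.
Qed.

Lemma nrm2_nonneg d u : 0 <= nrm2 d u.
Proof. apply rsum_nonneg. intros. apply Rle_0_sqr. Qed.

Lemma lim_infty_of_is_lim f (L : R) : is_lim f p_infty L -> lim_infty f L.
Proof.
  intros Hf eps Heps. apply is_lim_spec in Hf.
  destruct (Hf (mkposreal eps Heps)) as [M HM]. exists M. exact HM.
Qed.

Lemma normalised_closed_form n d g V : (0 < n)%nat -> 0 < g ->
  Rpower g (2 + INR d / 2) * (16 * (INR n * ((sqrt PI / sqrt g) ^ d / (INR n * INR n) * V)))
    / (INR n * Rpower PI (INR d / 2))
  = 16 / (INR n * INR n) * (g * g * V).
Proof.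
  intros Hn Hg. assert (0 < INR n) by (apply lt_0_INR, Hn).
  assert (0 < Rpower PI (INR d / 2)) by apply exp_pos.
  transitivity (Rpower g (2 + INR d / 2) * (sqrt PI / sqrt g) ^ d * (16 * V)
                / (INR n * INR n * Rpower PI (INR d / 2))); [field; lra|].
  rewrite Rpower_gauss_normalisation by exact Hg. field. lra.
Qed.

Theorem mainTheorem8 (n d : nat) (X : nat -> nat -> R) (A : nat -> nat -> R) :
  (1 <= d)%nat ->
  (d + 1 <= n)%nat ->
  pos_def d (sample_cov n X) ->
  is_sym_sqrt_inv d A (sample_cov n X) ->
  (exists T : R -> R, forall gamma, 0 < gamma -> is_T n d (Yres n d A X) gamma (T gamma)) /\
  (forall T : R -> R,
     (forall gamma, 0 < gamma -> is_T n d (Yres n d A X) gamma (T gamma)) ->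
     lim_infty
       (fun gamma => Rpower gamma (2 + INR d / 2) * (16 * T gamma)
                     / (INR n * Rpower PI (INR d / 2)))
       (2 * b1d n d (Yres n d A X) + b1d_tilde n d (Yres n d A X))).
Proof.
  intros _ Hn _ [HA [_ Hinv]].
  assert (Hn0 : (0 < n)%nat) by lia.
  set (Y := Yres n d A X).
  assert (Hcent : forall i, (i < d)%nat -> rsum n (fun j => Y j i) = 0)
    by (intros; apply rsum_Yres, Hn0).
  assert (Hwhite := fun i m => rsum_Yres_mult n d A X i m Hn0 HA Hinv).
  set (Sigma := fun g =>
         rsum2 n (fun j k => pair_term (gram d Y j k) (nrm2 d (Ysum Y j k)) (INR d) g)).
  set (Ic := fun g => (sqrt PI / sqrt g) ^ d / (INR n * INR n) * Sigma g).
  split.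
  { exists (fun g => INR n * Ic g). intros g Hg. exists (Ic g).
    split; [apply IntRd_integrand, Hg|reflexivity]. }
  intros T HT. apply lim_infty_of_is_lim.
  apply (is_lim_ext_loc (fun g => 16 / (INR n * INR n) * (g * g * Sigma g))).
  { exists 0. intros g Hg. destruct (HT g Hg) as [I [HI ->]].
    rewrite (IntRd_unique _ _ _ _ HI (IntRd_integrand n d Y g Hg)). fold (Sigma g).
    symmetry. apply normalised_closed_form; assumption. }
  rewrite <- b1d_combination, <- rsum2_pair_term_const_gram by assumption.
  apply (is_lim_scal_l (fun g => g * g * Sigma g) _ p_infty
           (rsum2 n (fun j k => pair_term_const (gram d Y j k) (nrm2 d (Ysum Y j k)) (INR d)))).
  apply is_lim_rsum2_pair_term.
  - intros. apply nrm2_nonneg.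
  - apply rsum2_gram; assumption.
  - apply rsum2_pair_term_lin_gram; assumption.
Qed.
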